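(* Let $G$ be a fullerene graph that has an efficient dominating set. Then the number of vertices of $G$ is divisible by $8$.
   Context: A fullerene graph is a finite simple connected (equivalently, $3$-connected) plane cubic graph all of whose faces are pentagons or hexagons. An efficient dominating set of a graph $G$ is an independent vertex set $D$ of $G$ such that every vertex of $G$ not in $D$ is adjacent to exactly one vertex of $D$. *)

From mathcomp Require Import all_boot fingroup perm.
Set Implicit Arguments. Unset Strict Implicit. Unset Printing Implicit Defensive.

Section Fullerene.
Variables (V : finType) (adj : rel V).

Definition simple_graph : Prop := symmetric adj /\ irreflexive adj.

Definition connected_graph : Prop := forall x y : V, connect adj x y.

Definition cubic : Prop := forall v : V, #|[set w | adj v w]| = 3.

Definition dart : pred (V * V) := [pred p | adj p.1 p.2].

(* A rotation system: for each vertex v, a permutation rot v of V which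
   maps the neighbourhood of v to itself, acting on it as a single cycle. *)
Definition rotation_system (rot : V -> {perm V}) : Prop :=
  (forall v u, adj v u -> adj v (rot v u)) /\
  (forall v u w, adj v u -> adj v w -> fconnect (rot v) u w).

Definition face_step (rot : V -> {perm V}) (p : V * V) : V * V :=
  (p.2, rot p.2 p.1).

Definition nfaces (rot : V -> {perm V}) : nat := fcard (face_step rot) dart.

(* Plane embedding with all faces pentagons or hexagons: a rotation system
   (combinatorial embedding) satisfying Euler's formula V - E + F = 2,
   i.e. 2(|V| + F) = (#darts) + 4 since #darts = 2E, whose face boundary
   walks all have length 5 or 6. *)
Definition plane_pent_hex_embedding : Prop :=
  exists rot : V -> {perm V},
    [/\ rotation_system rot,
        (2 * (#|V| + nfaces rot) = #|dart| + 4)%N &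
        forall d, dart d -> fingraph.order (face_step rot) d \in [:: 5; 6]%N].

Definition fullerene : Prop :=
  [/\ simple_graph, connected_graph, cubic & plane_pent_hex_embedding].

Definition independent (D : {set V}) : Prop :=
  forall x y, x \in D -> y \in D -> ~~ adj x y.

Definition efficient_dominating (D : {set V}) : Prop :=
  independent D /\
  forall x, x \notin D -> #|[set y in D | adj x y]| = 1.

End Fullerene.

From mathcomp Require Import all_boot fingroup perm.
Set Implicit Arguments. Unset Strict Implicit. Unset Printing Implicit Defensive.

(* In a cubic graph the closed neighbourhoods of an efficient dominating set D
   partition the vertices, so |V| = 4|D| and it remains to show that |D| is even.
   Call a dart (x, y) with x, y outside D an entry dart when its face continues
   from y into D, i.e. to the D-neighbour of y; every y outside D is the head
   of exactly one of them, so there are 3|D| entry darts.  Entry darts whose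
   reversal is again an entry dart are paired by reversal.  For the others the
   face through (x, y) reads u x y t z w with u, t in D: a pentagon would force
   w = u, although w lies outside D.  So it is a hexagon and the half turn
   (x, y) -> (z, w) pairs them. *)

Lemma even_card_involution (T : finType) (A : {set T}) (g : T -> T) :
  {in A, forall a, [/\ g a \in A, g a != a & g (g a) = a]} -> ~~ odd #|A|.
Proof.
move=> gA; pose lo := [set a in A | enum_rank a < enum_rank (g a)].
have gK : {in A, involutive g} by move=> a /gA[].
have inj_g : {in lo &, injective g}.
  by move=> a b /setIdP[/gK aK _] /setIdP[/gK bK _] gab; rewrite -aK gab bK.
have ->: A = lo :|: g @: lo.
  apply/setP=> a; rewrite inE; apply/idP/idP=> [aA | ].
    have [ga_A ga_a _] := gA a aA.
    rewrite !inE aA /=; case: ltngtP => [//|lt_ga_a|/val_inj/enum_rank_inj eq_a].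
    - by apply/imsetP; exists (g a); rewrite ?gK // inE ga_A gK.
    - by rewrite -eq_a eqxx in ga_a.
  by case/orP=> [/setIdP[]//|/imsetP[b /setIdP[/gA[gb_A _ _] _] ->]].
have disj : [disjoint lo & g @: lo].
  rewrite disjoints_subset; apply/subsetP=> a /setIdP[_ lt_a].
  rewrite inE; apply/imsetP=> -[b /setIdP[bA lt_b] eq_a].
  by move: lt_a; rewrite eq_a gK // ltnNge ltnW.
by rewrite cardsU (disjoint_setI0 disj) cards0 subn0 card_in_imset // addnn odd_double.
Qed.

Lemma iter_order_inj (T : finType) (f : T -> T) x i j :
  i < fingraph.order f x -> j < fingraph.order f x -> iter i f x = iter j f x -> i = j.
Proof. by move=> lt_i lt_j eq_ij; rewrite -(findex_iter lt_i) eq_ij findex_iter. Qed.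

Section CubicRotation.

Variables (V : finType) (adj : rel V) (v : V) (r : {perm V}).
Hypotheses (r_adj : forall u, adj v u -> adj v (r u))
  (r_cycle : forall u w, adj v u -> adj v w -> fconnect r u w)
  (deg3 : #|[set w | adj v w]| = 3).

Lemma order_rot_nbr u : adj v u -> fingraph.order r u = 3.
Proof.
move=> vu; rewrite -deg3; apply: eq_card => w; rewrite inE.
apply/idP/idP => [uw | /(r_cycle vu)//].
have iter_adj n : adj v (iter n r u) by elim: n => //= n; apply: r_adj.
by rewrite -(iter_findex uw).
Qed.

Lemma rot3_nbr u : adj v u -> r (r (r u)) = u.
Proof. by move=> vu; have := iter_order (@perm_inj _ r) u; rewrite order_rot_nbr. Qed.

Lemma rot_nbr_neq u : adj v u -> r u != u /\ r (r u) != u.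
Proof.
move=> vu; have lt_ord i : i < 3 -> i < fingraph.order r u by rewrite order_rot_nbr.
split; apply/eqP.
  by move/(iter_order_inj (lt_ord 1 isT) (lt_ord 0 isT)).
by move/(iter_order_inj (lt_ord 2 isT) (lt_ord 0 isT)).
Qed.

Lemma nbr_rot_cases u w : adj v u -> adj v w -> [\/ w = u, w = r u | w = r (r u)].
Proof.
move=> vu vw; have uw := r_cycle vu vw.
have := findex_max uw; rewrite order_rot_nbr //; have := iter_findex uw.
by case: (findex r u w) => [|[|[|]]] //= <- _; [apply: Or31 | apply: Or32 | apply: Or33].
Qed.

End CubicRotation.

Section EfficientDomination.

Variables (V : finType) (adj : rel V) (D : {set V}).
Hypotheses (adj_sym : symmetric adj) (D_edom : efficient_dominating adj D).

Lemma efficient_dominating_nbr x : x \notin D -> exists2 t, t \in D & adj x t.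
Proof.
move=> xD; have : 0 < #|[set y in D | adj x y]| by rewrite D_edom.2.
by case/card_gt0P=> t /setIdP[]; exists t.
Qed.

Lemma efficient_dominating_nbr_uniq x t t' :
  x \notin D -> t \in D -> t' \in D -> adj x t -> adj x t' -> t = t'.
Proof.
move=> xD tD t'D xt xt'; have /eqP/cards1P[c Nx] := D_edom.2 x xD.
have : t \in [set y in D | adj x y] by rewrite inE tD xt.
have : t' \in [set y in D | adj x y] by rewrite inE t'D xt'.
by rewrite Nx !inE => /eqP-> /eqP->.
Qed.

Lemma card_setC_efficient_dominating k :
  (forall v, #|[set w | adj v w]| = k) -> #|~: D| = k * #|D|.
Proof.
move=> deg; rewrite mulnC -sum_nat_const -sum1_card.
transitivity (\sum_(x in ~: D) \sum_(t in D) adj x t : nat).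
  apply: eq_bigr => x; rewrite inE => /D_edom.2 <-.
  by rewrite -sum1dep_card big_mkcondr.
rewrite exchange_big; apply: eq_bigr => t tD.
rewrite -(deg t) -sum1dep_card big_mkcond [RHS]big_mkcond; apply: eq_bigr => x _.
rewrite inE adj_sym; case: (boolP (x \in D)) => [xD | _] /=.
  by rewrite (negbTE (D_edom.1 t x tD xD)).
by case: (adj t x).
Qed.

End EfficientDomination.

Lemma face_step_inj (V : finType) (rot : V -> {perm V}) : injective (face_step rot).
Proof. by move=> [u v] [u' v'] [<-] /perm_inj->. Qed.

Section FullereneDomination.

Variables (V : finType) (adj : rel V) (rot : V -> {perm V}) (D : {set V}).
Hypotheses (adj_sym : symmetric adj) (adj_irr : irreflexive adj) (deg3 : cubic adj)
  (rot_sys : rotation_system adj rot)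
  (face_len : forall d, dart adj d -> fingraph.order (face_step rot) d \in [:: 5; 6])
  (D_edom : efficient_dominating adj D).

Local Notation face := (face_step rot).

Let rot_adj v u : adj v u -> adj v (rot v u).
Proof. exact: rot_sys.1. Qed.

Let rot3 v u : adj v u -> rot v (rot v (rot v u)) = u.
Proof. exact/(rot3_nbr (rot_sys.1 v) (rot_sys.2 v) (deg3 v)). Qed.

Let rot_neq v u : adj v u -> rot v u != u /\ rot v (rot v u) != u.
Proof. exact/(rot_nbr_neq (rot_sys.1 v) (rot_sys.2 v) (deg3 v)). Qed.

Let rot_cases v u w :
  adj v u -> adj v w -> [\/ w = u, w = rot v u | w = rot v (rot v u)].
Proof. exact/(nbr_rot_cases (rot_sys.1 v) (rot_sys.2 v) (deg3 v)). Qed.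

Lemma rot_dom_nbr_notin x t : x \notin D -> adj x t -> t \in D ->
  rot x t \notin D /\ rot x (rot x t) \notin D.
Proof.
move=> xD xt tD; have [ne1 ne2] := rot_neq xt.
have nbr_eq s : s \in D -> adj x s -> s = t.
  by move=> sD xs; apply: (efficient_dominating_nbr_uniq D_edom xD).
by split; [apply: contra ne1 | apply: contra ne2] => sD; rewrite (nbr_eq _ sD) // !rot_adj.
Qed.

Lemma rot_dom_nbr_in x y : x \notin D -> adj x y -> y \notin D -> rot x y \notin D ->
  rot x (rot x y) \in D.
Proof.
move=> xD xy yD ryD.
have [t tD xt] := efficient_dominating_nbr D_edom xD.
by move: yD ryD; case: (rot_cases xy xt) => <-; rewrite tD.
Qed.

Definition entry_darts : {set V * V} :=
  [set p | [&& adj p.1 p.2, p.1 \notin D, p.2 \notin D & rot p.2 p.1 \in D]].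

Lemma card_entry_darts : #|entry_darts| = #|~: D|.
Proof.
have inj_snd : {in entry_darts &, injective snd}.
  move=> [x y] [x' y']; rewrite !inE /= => /and4P[xy _ yD ryx] /and4P[x'y _ _ ryx'] eq_y.
  subst y'; congr (_, _); apply: (@perm_inj _ (rot y)).
  by apply: (efficient_dominating_nbr_uniq D_edom yD); rewrite // rot_adj // adj_sym.
rewrite -(card_in_imset inj_snd); congr #|pred_of_set _|; apply/setP=> y; rewrite inE.
apply/imsetP/idP => [[[x y'] + ->] | yD]; first by rewrite inE => /and4P[].
have [t tD yt] := efficient_dominating_nbr D_edom yD.
exists (rot y (rot y t), y) => //; rewrite inE /= yD rot3 // tD adj_sym !rot_adj //.
by rewrite (rot_dom_nbr_notin yD yt tD).2.
Qed.

Lemma entry_dart_half_turn p : p \in entry_darts -> swap_pair p \notin entry_darts ->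
  [/\ iter 3 face p \in entry_darts, swap_pair (iter 3 face p) \notin entry_darts,
      iter 3 face p != p & iter 3 face (iter 3 face p) = p].
Proof.
case: p => x y pS pN; rewrite inE /= in pS; case/and4P: pS => xy xD yD tD.
have rxyD : rot x y \notin D by move: pN; rewrite /swap_pair inE /= adj_sym xy xD yD.
set t := rot y x in tD; set z := rot t y; set w := rot z t; set u := rot x (rot x y).
have yt : adj y t by rewrite rot_adj // adj_sym.
have tz : adj t z by rewrite rot_adj // adj_sym.
have zD : z \notin D by apply: contraL tz => zD; rewrite D_edom.1.
have zt : adj z t by rewrite adj_sym.
have [wD rzwD] : w \notin D /\ rot z w \notin D := rot_dom_nbr_notin zD zt tD.
have uD : u \in D := rot_dom_nbr_in xD xy yD rxyD.
have ux : adj u x by rewrite adj_sym !rot_adj.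
have face_ux : face (u, x) = (x, y) by rewrite /face_step /= rot3.
have face4 : iter 4 face (x, y) = (w, rot w z) by [].
have order_ux : fingraph.order face (u, x) = 6.
  have := face_len (d := (u, x)) ux; rewrite !inE => /orP[/eqP order5 | /eqP //].
  have := iter_order (@face_step_inj _ rot) (u, x).
  rewrite order5 iterSr face_ux face4 => -[w_u _].
  by rewrite w_u uD in wD.
have face6 : iter 6 face (u, x) = (u, x).
  by rewrite -order_ux iter_order //; apply: face_step_inj.
have rwz : rot w z = u.
  by move: face6; rewrite iterSr face_ux iterS face4 => -[].
have face3 : iter 3 face (x, y) = (z, w) by [].
have zw : adj z w by rewrite rot_adj.
rewrite face3; split.
- by rewrite inE /= zw zD wD rwz uD.
- by rewrite /swap_pair inE /= (negbTE rzwD) !andbF.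
- apply/eqP=> zw_xy; have := @iter_order_inj _ face (u, x) 4 1.
  by rewrite order_ux iterSr face_ux face3 zw_xy => /(_ isT isT (esym face_ux)).
- by rewrite -face3 -iterD -face_ux -iterSr iterS face6.
Qed.

Lemma even_card_entry_darts : ~~ odd #|entry_darts|.
Proof.
pose Sym := [set p | swap_pair p \in entry_darts].
have even_sym : ~~ odd #|entry_darts :&: Sym|.
  apply: (even_card_involution (g := swap_pair)) => -[x y].
  rewrite in_setI [_ \in Sym]inE => /andP[xyS yxS].
  rewrite in_setI [_ \in Sym]inE xyS yxS; split=> //.
  by apply/eqP=> -[yx _]; move: xyS; rewrite inE yx adj_irr.
have even_asym : ~~ odd #|entry_darts :\: Sym|.
  apply: (even_card_involution (g := iter 3 face)) => p.
  rewrite in_setD [p \in Sym]inE => /andP[pN pS].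
  have [qS qN ne_qp qK] := entry_dart_half_turn pS pN.
  by rewrite in_setD [_ \in Sym]inE qS qN.
by rewrite -(cardsID Sym) oddD (negbTE even_sym) (negbTE even_asym).
Qed.

End FullereneDomination.

Theorem mainTheorem2 (V : finType) (adj : rel V) :
  fullerene adj ->
  (exists D : {set V}, efficient_dominating adj D) ->
  (8 %| #|V|)%N.
Proof.
case=> [[adj_sym adj_irr] _ deg3 [rot [rot_sys _ face_len]]] [D D_edom].
have cardC : #|~: D| = 3 * #|D| := card_setC_efficient_dominating adj_sym D_edom deg3.
have even_D : ~~ odd #|D|.
  have := even_card_entry_darts adj_sym adj_irr deg3 rot_sys face_len D_edom.
  by rewrite card_entry_darts // cardC oddM.
rewrite -(cardsC D) cardC -mulSn -(odd_double_half #|D|) (negbTE even_D) -mul2n.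
by rewrite mulnA dvdn_mulr.
Qed.
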